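(* For every $d\ge2$, $B_{d,3}(1,1)=3$.
   Context: $T_{d,3}=\bigoplus_{\ell=0}^3(\mathbb{R}^d)^{\otimes\ell}$ is the truncated tensor algebra with product the bilinear extension of the tensor product of levels, set to $0$ when the total level exceeds $3$. $\mathfrak{g}_{d,3}$ is the smallest Lie subalgebra (commutator bracket) containing $e_1,\dots,e_d$; $\exp(\mathbf{z})=\sum_{\ell=0}^3\mathbf{z}^{\otimes\ell}/\ell!$; $\mathcal{G}_{d,3}=\exp(\mathfrak{g}_{d,3})$ (a group), $\log=\exp^{-1}$. For $\mathbf{x}\in\mathcal{G}_{d,3}^N$, $\mathsf{bary}(\mathbf{x})$ is the unique $\mathbf{m}$ with $\sum_i\log(\mathbf{m}^{-1}\mathbf{x}_i)=0$. For a path $X:[0,1]\to\mathbb{R}^d$ its $3$-truncated signature $\sigma(X)\in\mathcal{G}_{d,3}$ has $\sigma^{(0)}=1$ and $\sigma^{(\ell)}_{w_1\dots w_\ell}=\int_{0<t_1<\dots<t_\ell<1}\dot X_{w_1}(t_1)\cdots\dot X_{w_\ell}(t_\ell)\,dt$. $\mathcal{L}^{\mathrm{im}}_{d,\le 3,m}$ is the set of $\sigma(X)$ for piecewise linear $X:[0,1]\to\mathbb{R}^d$ with $m$ segments, and $B_{d,3}(\alpha)=\min\{m\in\mathbb{N}:\mathsf{bary}(\mathcal{L}^{\mathrm{im}}_{d,\le 3,\alpha_1}\times\dots\times\mathcal{L}^{\mathrm{im}}_{d,\le 3,\alpha_N})\subseteq\mathcal{L}^{\mathrm{im}}_{d,\le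 3,m}\}$. *)

From Stdlib Require Import Reals List.
From Coquelicot Require Import Coquelicot.
From mathcomp Require Import ssreflect ssrbool eqtype ssrnat fintype.

Set Implicit Arguments.
Unset Strict Implicit.

Local Open Scope R_scope.

(** Truncated tensor algebra T_{d,3} = R + R^d + (R^d)^{(x)2} + (R^d)^{(x)3},
    coordinates indexed by words over 'I_d. *)
Record T3 (d : nat) := mkT3 {
  t0 : R;
  t1 : 'I_d -> R;
  t2 : 'I_d -> 'I_d -> R;
  t3 : 'I_d -> 'I_d -> 'I_d -> R }.

Arguments mkT3 {d}.

Definition tzero (d : nat) : T3 d :=
  mkT3 0 (fun _ => 0) (fun _ _ => 0) (fun _ _ _ => 0).

Definition tone (d : nat) : T3 d :=
  mkT3 1 (fun _ => 0) (fun _ _ => 0) (fun _ _ _ => 0).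

Definition tadd d (x y : T3 d) : T3 d :=
  mkT3 (t0 x + t0 y) (fun a => t1 x a + t1 y a)
       (fun a b => t2 x a b + t2 y a b)
       (fun a b c => t3 x a b c + t3 y a b c).

Definition tscale d (r : R) (x : T3 d) : T3 d :=
  mkT3 (r * t0 x) (fun a => r * t1 x a) (fun a b => r * t2 x a b)
       (fun a b c => r * t3 x a b c).

Definition tmul d (x y : T3 d) : T3 d :=
  mkT3 (t0 x * t0 y)
       (fun a => t0 x * t1 y a + t1 x a * t0 y)
       (fun a b => t0 x * t2 y a b + t1 x a * t1 y b + t2 x a b * t0 y)
       (fun a b c => t0 x * t3 y a b c + t1 x a * t2 y b c
                     + t2 x a b * t1 y c + t3 x a b c * t0 y).

Definition tsub d (x y : T3 d) : T3 d := tadd x (tscale (-1) y).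

Definition tbracket d (x y : T3 d) : T3 d := tsub (tmul x y) (tmul y x).

Definition tbasis d (i : 'I_d) : T3 d :=
  mkT3 0 (fun j => if j == i then 1 else 0) (fun _ _ => 0) (fun _ _ _ => 0).

Definition texp d (z : T3 d) : T3 d :=
  tadd (tone d) (tadd z (tadd (tscale (/2) (tmul z z))
                              (tscale (/6) (tmul z (tmul z z))))).

Inductive in_lie d : T3 d -> Prop :=
  | lie_gen : forall i, in_lie (tbasis i)
  | lie_add : forall x y, in_lie x -> in_lie y -> in_lie (tadd x y)
  | lie_scale : forall r x, in_lie x -> in_lie (tscale r x)
  | lie_bracket : forall x y, in_lie x -> in_lie y -> in_lie (tbracket x y).

Definition in_G d (m : T3 d) : Prop := exists z, in_lie z /\ texp z = m.

Definition tsum d (zs : list (T3 d)) : T3 d := fold_right (@tadd d) (tzero d) zs.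

(** m is a barycenter of x = (x_1,...,x_N):
    m in G and sum_i log(m^{-1} x_i) = 0, where log = exp^{-1} on g,
    i.e. z_i = log(m^{-1} x_i) is the z_i in g with exp(z_i) = m^{-1} x_i,
    equivalently m * exp(z_i) = x_i. *)
Definition is_bary d (x : list (T3 d)) (m : T3 d) : Prop :=
  in_G m /\
  exists zs : list (T3 d),
    Forall2 (fun xi z => in_lie z /\ tmul m (texp z) = xi) x zs /\
    tsum zs = tzero d.

(** Piecewise linear path X : [0,1] -> R^d with m segments
    (breakpoints 0 = s_0 < s_1 < ... < s_m = 1, X affine on each piece).
    X is given as a function on R; only its values on [0,1] matter. *)
Definition piecewise_linear d (m : nat) (X : R -> 'I_d -> R) : Prop :=
  exists s : nat -> R,
    s 0%N = 0 /\ s m = 1 /\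
    (forall k, (k < m)%N -> s k < s k.+1) /\
    (forall k, (k < m)%N -> forall t, s k <= t <= s k.+1 -> forall w,
       X t w = X (s k) w
               + (t - s k) / (s k.+1 - s k) * (X (s k.+1) w - X (s k) w)).

Definition Xdot d (X : R -> 'I_d -> R) (w : 'I_d) (t : R) : R :=
  Derive (fun u => X u w) t.

(** 3-truncated signature, simplex integrals written as iterated integrals *)
Definition sig3 d (X : R -> 'I_d -> R) : T3 d :=
  mkT3 1
    (fun a => RInt (fun t1 => Xdot X a t1) 0 1)
    (fun a b => RInt (fun t2 => RInt (fun t1 => Xdot X a t1) 0 t2
                                * Xdot X b t2) 0 1)
    (fun a b c => RInt (fun t3 =>
                   RInt (fun t2 => RInt (fun t1 => Xdot X a t1) 0 t2
                                   * Xdot X b t2) 0 t3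
                   * Xdot X c t3) 0 1).

Definition Lim d (m : nat) (g : T3 d) : Prop :=
  exists X : R -> 'I_d -> R, piecewise_linear m X /\ sig3 X = g.

Definition bary_incl d (alpha : list nat) (m : nat) : Prop :=
  forall (x : list (T3 d)) (g : T3 d),
    Forall2 (fun a xi => Lim a xi) alpha x ->
    is_bary x g -> Lim m g.

Definition B_eq d (alpha : list nat) (n : nat) : Prop :=
  bary_incl d alpha n /\ forall m, (m < n)%N -> ~ bary_incl d alpha m.

From Pilot Require Import Defs.
From Stdlib Require Import Reals List Lra FunctionalExtensionality.
From Coquelicot Require Import Coquelicot.
From mathcomp Require Import ssreflect ssrbool eqtype ssrnat fintype.

(* Chen's identity makes the signature of a piecewise linear path with [m]
   segments the product [exp v_1 ... exp v_m] of the exponentials of its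
   increments, and every such product is attained; so [L_m] is the set of
   products of [m] exponentials of vectors.  If [g] is the barycenter of
   [exp a] and [exp b], the two logarithms are opposite, hence
   [u = g^-1 exp b] satisfies [u^2 = exp (-a) exp b].  Squares determine
   elements of the group, and [u = exp p exp q] for explicit [p, q]; thus
   [g = exp a exp p exp q] lies in [L_3].  For [a = e_1], [b = e_2] the
   coordinates [g^1 = g^2 = 1/2], [g^12 = 1/8], [g^112 = 0] admit no
   solution of the form [exp u] or [exp u exp w]. *)

Set Implicit Arguments.
Unset Strict Implicit.
Local Open Scope R_scope.

Section TruncatedTensorAlgebra.
Variable d : nat.
Implicit Types (v : 'I_d -> R).

Lemma T3_ext (x y : T3 d) : t0 x = t0 y -> (forall a, t1 x a = t1 y a) ->
  (forall a b, t2 x a b = t2 y a b) -> (forall a b c, t3 x a b c = t3 y a b c) ->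
  x = y.
Proof.
case: x => x0 x1 x2 x3; case: y => y0 y1 y2 y3 /= -> E1 E2 E3.
have -> : x1 = y1 by apply: functional_extensionality.
have -> : x2 = y2 by do 2 (apply: functional_extensionality => ?).
by have -> : x3 = y3 by do 3 (apply: functional_extensionality => ?).
Qed.

Ltac T3_ring := apply: T3_ext => *; cbn [t0 t1 t2 t3]; field.

Definition tvec v : T3 d := mkT3 0 v (fun _ _ => 0) (fun _ _ _ => 0).

Lemma texp_tvec v : texp (tvec v) =
  mkT3 1 v (fun a b => v a * v b / 2) (fun a b c => v a * v b * v c / 6).
Proof. rewrite /texp /tone /tmul /tadd /tscale /tvec; T3_ring. Qed.

Lemma texp_mkT3_0 (z1 : 'I_d -> R) z2 z3 : texp (mkT3 0 z1 z2 z3) = mkT3 1 z1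
  (fun a b => z2 a b + z1 a * z1 b / 2)
  (fun a b c => z3 a b c + (z1 a * z2 b c + z2 a b * z1 c) / 2 + z1 a * z1 b * z1 c / 6).
Proof. rewrite /texp /tone /tmul /tadd /tscale; T3_ring. Qed.

Lemma tmul_mkT3_1 (x1 y1 : 'I_d -> R) x2 y2 x3 y3 : tmul (mkT3 1 x1 x2 x3) (mkT3 1 y1 y2 y3) =
  mkT3 1 (fun a => x1 a + y1 a) (fun a b => x2 a b + x1 a * y1 b + y2 a b)
    (fun a b c => x3 a b c + x2 a b * y1 c + x1 a * y2 b c + y3 a b c).
Proof. rewrite /tmul; T3_ring. Qed.

Lemma tadd_mkT3_0 (x1 y1 : 'I_d -> R) x2 y2 x3 y3 : tadd (mkT3 0 x1 x2 x3) (mkT3 0 y1 y2 y3) =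
  mkT3 0 (fun a => x1 a + y1 a) (fun a b => x2 a b + y2 a b)
    (fun a b c => x3 a b c + y3 a b c).
Proof. rewrite /tadd; T3_ring. Qed.

Lemma tscale_mkT3_0 r (x1 : 'I_d -> R) x2 x3 : tscale r (mkT3 0 x1 x2 x3) =
  mkT3 0 (fun a => r * x1 a) (fun a b => r * x2 a b) (fun a b c => r * x3 a b c).
Proof. rewrite /tscale; T3_ring. Qed.

Lemma tbracket_mkT3_0 (x1 y1 : 'I_d -> R) x2 y2 x3 y3 :
  tbracket (mkT3 0 x1 x2 x3) (mkT3 0 y1 y2 y3) =
  mkT3 0 (fun _ => 0) (fun a b => x1 a * y1 b - y1 a * x1 b)
    (fun a b c => x1 a * y2 b c + x2 a b * y1 c - (y1 a * x2 b c + y2 a b * x1 c)).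
Proof. rewrite /tbracket /tsub /tmul /tadd /tscale; T3_ring. Qed.

Lemma tmulA (x y z : T3 d) : tmul (tmul x y) z = tmul x (tmul y z).
Proof. rewrite /tmul; T3_ring. Qed.

Lemma tmul1l (x : T3 d) : tmul (tone d) x = x.
Proof. rewrite /tmul /tone; T3_ring. Qed.

Lemma tmul1r (x : T3 d) : tmul x (tone d) = x.
Proof. rewrite /tmul /tone; T3_ring. Qed.

Lemma texpN (z : T3 d) : t0 z = 0 -> tmul (texp z) (texp (tscale (-1) z)) = tone d.
Proof.
case: z => z0 z1 z2 z3 /= ->.
rewrite tscale_mkT3_0 !texp_mkT3_0 tmul_mkT3_1 /tone; T3_ring.
Qed.

Lemma texp_tvecN v : tmul (texp (tvec v)) (texp (tvec (fun a => - v a))) = tone d.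
Proof.
have -> : tvec (fun a => - v a) = tscale (-1) (tvec v).
  by rewrite /tvec tscale_mkT3_0; congr mkT3; do ?[apply: functional_extensionality => ?]; ring.
exact: texpN.
Qed.

(* Squares determine elements of the group {t0 = 1}: level by level, the
   top coordinate of [u * u] is twice that of [u] plus lower-level terms. *)
Lemma tsqr_inj (u w : T3 d) : t0 u = 1 -> t0 w = 1 -> tmul u u = tmul w w -> u = w.
Proof.
move=> Hu Hw E.
have E1 a : t1 u a = t1 w a.
  by have := f_equal (fun x => t1 x a) E; rewrite /= Hu Hw; lra.
have E2 a b : t2 u a b = t2 w a b.
  by have := f_equal (fun x => t2 x a b) E; rewrite /= Hu Hw !E1; lra.
have E3 a b c : t3 u a b c = t3 w a b c.
  by have := f_equal (fun x => t3 x a b c) E; rewrite /= Hu Hw !E1 !E2; lra.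
by apply: T3_ext; rewrite ?Hu ?Hw.
Qed.

Lemma in_lie_t0 (z : T3 d) : in_lie z -> t0 z = 0.
Proof. by elim=> //= *; nra. Qed.

End TruncatedTensorAlgebra.

Fixpoint texp_prod d (v : nat -> 'I_d -> R) (n : nat) : T3 d :=
  if n is k.+1 then tmul (texp_prod v k) (texp (tvec (v k))) else tone d.

Lemma texp_prod_t0 d (v : nat -> 'I_d -> R) n : t0 (texp_prod v n) = 1.
Proof. by elim: n => [|n IH] //=; rewrite IH; lra. Qed.

Lemma eq_texp_prod d (v v' : nat -> 'I_d -> R) n :
  (forall k, (k < n)%N -> v k = v' k) -> texp_prod v n = texp_prod v' n.
Proof.
elim: n => [|n IH] // E /=.
by rewrite E // IH // => k Hk; apply: E; apply: ltnW.
Qed.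

Section GluedPrimitive.
Variables (s : nat -> R) (m : nat).
Hypothesis s0 : s 0%N = 0.
Hypothesis s_incr : forall k, (k < m)%N -> s k < s k.+1.

Lemma is_RInt_glued_primitive (f : R -> R) (phi dphi : nat -> R -> R) :
  (forall k, (k < m)%N -> forall x, is_derive (phi k) x (dphi k x)) ->
  (forall k, (k < m)%N -> forall x, continuous (dphi k) x) ->
  (forall k, (k < m)%N -> forall x, s k < x < s k.+1 -> f x = dphi k x) ->
  phi 0%N 0 = 0 ->
  (forall k, (k.+1 < m)%N -> phi k.+1 (s k.+1) = phi k (s k.+1)) ->
  forall k, (k < m)%N -> forall t, s k <= t <= s k.+1 -> is_RInt f 0 t (phi k t).
Proof.
move=> Hder Hcont Hf phi0 Hglue.
have on_segment k : (k < m)%N -> forall t, s k <= t <= s k.+1 ->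
    is_RInt f (s k) t (phi k t - phi k (s k)).
  move=> Hk t Ht; apply: (is_RInt_ext (dphi k)).
    move=> x; rewrite Rmin_left ?Rmax_right; try lra.
    by move=> Hx; symmetry; apply: Hf => //; lra.
  by apply: is_RInt_derive => x _; auto.
elim=> [|k IH] Hk t Ht.
  by have := on_segment 0%N Hk t Ht; rewrite s0 phi0 Rminus_0_r.
have Hk' : (k < m)%N by apply: ltnW.
have H1 := IH Hk' (s k.+1) (conj (Rlt_le _ _ (s_incr Hk')) (Rle_refl _)).
have := is_RInt_Chasles _ _ _ _ _ _ H1 (on_segment k.+1 Hk t Ht).
by rewrite Hglue // /plus /= Rplus_minus.
Qed.

End GluedPrimitive.

Section PiecewiseLinearSignature.
Variables (d : nat) (X : R -> 'I_d -> R) (s : nat -> R) (m : nat).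
Hypothesis s0 : s 0%N = 0.
Hypothesis s_incr : forall k, (k < m)%N -> s k < s k.+1.
Hypothesis X_affine : forall k, (k < m)%N -> forall t, s k <= t <= s k.+1 ->
  forall w, X t w = X (s k) w
                    + (t - s k) / (s k.+1 - s k) * (X (s k.+1) w - X (s k) w).

Definition increment k w := X (s k.+1) w - X (s k) w.
Definition seg_time k x := (x - s k) / (s k.+1 - s k).

(* The signature of [X] on [[0, x]] for [x] in the [k]-th segment, i.e. the
   coordinates of [texp_prod increment k * exp (seg_time k x * increment k)]. *)
Definition partial_sig k x : T3 d :=
  let S := texp_prod increment k in
  let l := seg_time k x in
  let v := increment k in
  mkT3 1 (fun a => t1 S a + l * v a)
    (fun a b => t2 S a b + l * t1 S a * v b + l ^ 2 / 2 * v a * v b)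
    (fun a b c => t3 S a b c + l * t2 S a b * v c + l ^ 2 / 2 * t1 S a * v b * v c
                  + l ^ 3 / 6 * v a * v b * v c).

Lemma seg_length_neq0 k : (k < m)%N -> s k.+1 - s k <> 0.
Proof. by move/s_incr; lra. Qed.

Lemma partial_sig_start k : partial_sig k (s k) = texp_prod increment k.
Proof.
rewrite /partial_sig /seg_time Rminus_diag /Rdiv Rmult_0_l.
by apply: T3_ext => * /=; rewrite ?texp_prod_t0; ring.
Qed.

Lemma partial_sig_end k : (k < m)%N -> partial_sig k (s k.+1) = texp_prod increment k.+1.
Proof.
move/seg_length_neq0 => Hk; have l1 : seg_time k (s k.+1) = 1 by rewrite /seg_time; field.
rewrite /partial_sig l1 /= texp_tvec.
by apply: T3_ext => * /=; rewrite ?texp_prod_t0; field.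
Qed.

Lemma is_derive_partial_sig1 k a x : (k < m)%N ->
  is_derive (fun x => t1 (partial_sig k x) a) x (increment k a / (s k.+1 - s k)).
Proof.
move/seg_length_neq0 => Hk; rewrite /partial_sig /seg_time /=.
by auto_derive => //; field.
Qed.

Lemma is_derive_partial_sig2 k a b x : (k < m)%N ->
  is_derive (fun x => t2 (partial_sig k x) a b) x
    (t1 (partial_sig k x) a * (increment k b / (s k.+1 - s k))).
Proof.
move/seg_length_neq0 => Hk; rewrite /partial_sig /seg_time /=.
by auto_derive => //; field.
Qed.

Lemma is_derive_partial_sig3 k a b c x : (k < m)%N ->
  is_derive (fun x => t3 (partial_sig k x) a b c) x
    (t2 (partial_sig k x) a b * (increment k c / (s k.+1 - s k))).
Proof.
move/seg_length_neq0 => Hk; rewrite /partial_sig /seg_time /=.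
by auto_derive => //; field.
Qed.

Lemma Xdot_on_segment k w : (k < m)%N -> forall x, s k < x < s k.+1 ->
  Xdot X w x = increment k w / (s k.+1 - s k).
Proof.
move=> Hk x Hx; rewrite /Xdot (Derive_ext_loc _
  (fun u => X (s k) w + (u - s k) / (s k.+1 - s k) * increment k w)).
  apply: is_derive_unique; auto_derive => //.
  by have := seg_length_neq0 Hk; move=> ?; field.
apply: (locally_interval _ x (s k) (s k.+1)); try (simpl; lra).
by move=> y /= ? ?; apply: X_affine => //; lra.
Qed.

Lemma is_RInt_sig1 a : forall k, (k < m)%N -> forall t, s k <= t <= s k.+1 ->
  is_RInt (Xdot X a) 0 t (t1 (partial_sig k t) a).
Proof.
apply: (is_RInt_glued_primitive s0 s_incr (phi := fun k t => t1 (partial_sig k t) a)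
  (dphi := fun k _ => increment k a / (s k.+1 - s k))).
- by move=> j Hj x; apply: is_derive_partial_sig1.
- by move=> *; apply: continuous_const.
- by move=> j Hj x Hx; apply: Xdot_on_segment.
- by rewrite /partial_sig /seg_time s0 Rminus_diag /Rdiv /= /tone /=; ring.
- by move=> j Hj; rewrite partial_sig_start partial_sig_end //; apply: ltnW.
Qed.

Lemma is_RInt_sig2 a b : forall k, (k < m)%N -> forall t, s k <= t <= s k.+1 ->
  is_RInt (fun t => RInt (Xdot X a) 0 t * Xdot X b t) 0 t (t2 (partial_sig k t) a b).
Proof.
apply: (is_RInt_glued_primitive s0 s_incr (phi := fun k t => t2 (partial_sig k t) a b)
  (dphi := fun k x => t1 (partial_sig k x) a * (increment k b / (s k.+1 - s k)))).
- by move=> j Hj x; apply: is_derive_partial_sig2.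
- move=> j Hj x; apply: continuous_mult; last exact: continuous_const.
  by apply: ex_derive_continuous; eexists; apply: is_derive_partial_sig1.
- move=> j Hj x Hx; rewrite (Xdot_on_segment b Hj Hx).
  by rewrite (is_RInt_unique _ _ _ _ (@is_RInt_sig1 a j Hj x _)) //; lra.
- by rewrite /partial_sig /seg_time s0 Rminus_diag /Rdiv /= /tone /=; ring.
- by move=> j Hj; rewrite partial_sig_start partial_sig_end //; apply: ltnW.
Qed.

Lemma is_RInt_sig3 a b c : forall k, (k < m)%N -> forall t, s k <= t <= s k.+1 ->
  is_RInt (fun t => RInt (fun u => RInt (Xdot X a) 0 u * Xdot X b u) 0 t * Xdot X c t)
    0 t (t3 (partial_sig k t) a b c).
Proof.
apply: (is_RInt_glued_primitive s0 s_incr (phi := fun k t => t3 (partial_sig k t) a b c)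
  (dphi := fun k x => t2 (partial_sig k x) a b * (increment k c / (s k.+1 - s k)))).
- by move=> j Hj x; apply: is_derive_partial_sig3.
- move=> j Hj x; apply: continuous_mult; last exact: continuous_const.
  by apply: ex_derive_continuous; eexists; apply: is_derive_partial_sig2.
- move=> j Hj x Hx; rewrite (Xdot_on_segment c Hj Hx).
  by rewrite (is_RInt_unique _ _ _ _ (@is_RInt_sig2 a b j Hj x _)) //; lra.
- by rewrite /partial_sig /seg_time s0 Rminus_diag /Rdiv /= /tone /=; ring.
- by move=> j Hj; rewrite partial_sig_start partial_sig_end //; apply: ltnW.
Qed.

Lemma sig3_piecewise_linear : s m = 1 -> sig3 X = texp_prod increment m.
Proof.
move=> sm1; have [m0|m_gt0] := posnP m; first by rewrite m0 s0 in sm1; lra.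
have Hn : (m.-1 < m)%N by rewrite ltn_predL.
have Hend : s m.-1 <= 1 <= s m.-1.+1 by have := s_incr Hn; rewrite prednK // sm1; lra.
rewrite -(prednK m_gt0) -partial_sig_end ?prednK // sm1.
apply: T3_ext => //= [a|a b|a b c]; apply: is_RInt_unique.
- exact: is_RInt_sig1.
- exact: is_RInt_sig2.
- exact: is_RInt_sig3.
Qed.

End PiecewiseLinearSignature.

Lemma Lim_texp_prod d m (g : T3 d) : Defs.Lim m g -> exists v, g = texp_prod v m.
Proof.
move=> [X [[s [s0 [sm1 [Hincr Haff]]]] <-]]; exists (increment X s).
exact: sig3_piecewise_linear.
Qed.

Lemma not_Lim0 d (g : T3 d) : ~ Defs.Lim 0 g.
Proof. by move=> [X [[s [s0 [s1 _]]] _]]; rewrite s0 in s1; lra. Qed.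

Section Polygon.
Variables (d : nat) (v : nat -> 'I_d -> R) (m : nat).
Hypothesis m_gt0 : (0 < m)%N.

Definition ramp u := Rmin 1 (Rmax 0 u).

Lemma ramp_ge1 u : 1 <= u -> ramp u = 1.
Proof. by rewrite /ramp /Rmin /Rmax; do 2 case: Rle_dec; lra. Qed.

Lemma ramp_le0 u : u <= 0 -> ramp u = 0.
Proof. by rewrite /ramp /Rmin /Rmax; do 2 case: Rle_dec; lra. Qed.

Lemma ramp_id u : 0 <= u <= 1 -> ramp u = u.
Proof. by rewrite /ramp /Rmin /Rmax; do 2 case: Rle_dec; lra. Qed.

Fixpoint vsum n w : R := if n is k.+1 then vsum k w + v k w else 0.

(* Passes through the vertex [vsum k] at time [polygon_time k = k / m]; the
   [k]-th ramp moves along [v k] during [[k / m, (k + 1) / m]]. *)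
Fixpoint polygon n t w : R :=
  if n is k.+1 then polygon k t w + ramp (INR m * t - INR k) * v k w else 0.

Definition polygon_time k := INR k / INR m.

Let m_pos : 0 < INR m.
Proof. exact/lt_0_INR/ltP. Qed.

Lemma polygon_time_lt k : polygon_time k < polygon_time k.+1.
Proof.
rewrite /polygon_time S_INR /Rdiv; apply: Rmult_lt_compat_r; last by lra.
exact/Rinv_0_lt_compat/m_pos.
Qed.

Lemma polygon_on_segment k n t w : polygon_time k <= t <= polygon_time k.+1 ->
  polygon n t w =
  if (n <= k)%N then vsum n w else vsum k w + (INR m * t - INR k) * v k w.
Proof.
move=> Ht.
have time_scale j : INR m * polygon_time j = INR j.
  by rewrite /polygon_time; field; apply: Rgt_not_eq; apply: m_pos.
have [Hk Hk1] : INR k <= INR m * t /\ INR m * t <= INR k + 1.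
  rewrite -S_INR -(time_scale k) -(time_scale k.+1).
  by have := m_pos; split; apply: Rmult_le_compat_l; lra.
elim: n => [|n IH] //=; rewrite IH.
case: (ltngtP n k) => [n_lt_k|k_lt_n|->].
- have Hn : INR n + 1 <= INR k by rewrite -S_INR; apply/le_INR/leP.
  by rewrite ramp_ge1; [ring | lra].
- have Hn : INR k + 1 <= INR n by rewrite -S_INR; apply/le_INR/leP.
  by rewrite ramp_le0; [ring | lra].
- by rewrite ramp_id; lra.
Qed.

Lemma polygon_at_vertices k w : (k < m)%N ->
  polygon m (polygon_time k) w = vsum k w /\
  polygon m (polygon_time k.+1) w = vsum k w + v k w.
Proof.
move=> Hk; have m_neq0 := Rgt_not_eq _ _ m_pos.
have time_lt := polygon_time_lt k.
have mk : (m <= k)%N = false by rewrite leqNgt Hk.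
rewrite !(@polygon_on_segment k) ?(ifF _ _ mk); try lra.
by rewrite /polygon_time S_INR; split; field.
Qed.

Lemma texp_prod_Lim : Defs.Lim m (texp_prod v m).
Proof.
have m_neq0 := Rgt_not_eq _ _ m_pos.
have time0 : polygon_time 0 = 0 by rewrite /polygon_time /Rdiv Rmult_0_l.
have timem : polygon_time m = 1 by rewrite /polygon_time; field.
have affine k : (k < m)%N -> forall t, polygon_time k <= t <= polygon_time k.+1 ->
    forall w, polygon m t w = polygon m (polygon_time k) w + (t - polygon_time k)
      / (polygon_time k.+1 - polygon_time k)
      * (polygon m (polygon_time k.+1) w - polygon m (polygon_time k) w).
  move=> Hk t Ht w; have mk : (m <= k)%N = false by rewrite leqNgt Hk.
  have [-> ->] := polygon_at_vertices w Hk.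
  rewrite (polygon_on_segment m w Ht) mk /polygon_time S_INR; field; split; [done | lra].
exists (polygon m); split.
  by exists polygon_time; split; [|split; [|split]] => // k _; apply: polygon_time_lt.
rewrite (@sig3_piecewise_linear _ _ _ _ time0 _ affine timem); last by move=> k _; apply: polygon_time_lt.
apply: eq_texp_prod => k Hk; apply: functional_extensionality => w.
by have [E0 E1] := polygon_at_vertices w Hk; rewrite /increment E0 E1; ring.
Qed.

End Polygon.

Lemma Forall2_pair_inv A B (P : A -> B -> Prop) a1 a2 l :
  Forall2 P (a1 :: a2 :: nil) l -> exists b1 b2, l = b1 :: b2 :: nil /\ P a1 b1 /\ P a2 b2.
Proof.
move=> H; inversion_clear H as [|? b1 ? l1 P1 HP].
inversion_clear HP as [|? b2 ? l2 P2 HP'].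
by inversion_clear HP'; exists b1, b2.
Qed.

Section Barycenter.
Variable d : nat.
Implicit Types (a b : 'I_d -> R) (x y : T3 d).

(* [p + q = (b - a)/2] and [[p, q] = -[a, b]/2] match levels one and two of
   [(exp p exp q)^2 = exp (-a) exp b]; for this choice level three holds too. *)
Definition root_fst a b w := (-3 * a w - b w) / 4.
Definition root_snd a b w := (a w + 3 * b w) / 4.

Definition texp_root a b : T3 d :=
  tmul (texp (tvec (root_fst a b))) (texp (tvec (root_snd a b))).

Lemma texp_root_sqr a b :
  tmul (texp_root a b) (texp_root a b) = tmul (texp (tvec (fun w => - a w))) (texp (tvec b)).
Proof.
rewrite /texp_root !texp_tvec !tmul_mkT3_1 /root_fst /root_snd.
by apply: T3_ext => * /=; field.
Qed.

Definition root_log x y : T3 d :=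
  tadd (tscale (/2) (tsub y x))
    (tadd (tscale (-/4) (tbracket x y))
      (tscale (/24) (tadd (tbracket x (tbracket x y)) (tbracket y (tbracket x y))))).

Definition bary_log x y : T3 d :=
  tadd (tscale (/2) (tadd x y)) (tscale (/48) (tbracket (tsub y x) (tbracket x y))).

Lemma in_lie_root_log x y : in_lie x -> in_lie y -> in_lie (root_log x y).
Proof.
move=> Lx Ly; have Lxy := lie_bracket Lx Ly.
apply: lie_add; first by apply/lie_scale/lie_add => //; apply: lie_scale.
apply: lie_add; first exact: lie_scale.
by apply/lie_scale/lie_add; apply: lie_bracket.
Qed.

Lemma in_lie_bary_log x y : in_lie x -> in_lie y -> in_lie (bary_log x y).
Proof.
move=> Lx Ly; apply: lie_add; first by apply/lie_scale/lie_add.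
apply/lie_scale/lie_bracket/lie_bracket => //.
by apply: lie_add => //; apply: lie_scale.
Qed.

Ltac expand_tvec := rewrite /tsub /tvec;
  repeat rewrite ?tbracket_mkT3_0 ?tadd_mkT3_0 ?tscale_mkT3_0.

Lemma texp_root_log a b : texp_root a b = texp (root_log (tvec a) (tvec b)).
Proof.
rewrite /texp_root !texp_tvec tmul_mkT3_1 /root_log; expand_tvec.
by rewrite texp_mkT3_0 /root_fst /root_snd; apply: T3_ext => * /=; field.
Qed.

Lemma texp_bary_log a b :
  tmul (texp (tvec a)) (texp_root a b) = texp (bary_log (tvec a) (tvec b)).
Proof.
rewrite /texp_root !texp_tvec !tmul_mkT3_1 /bary_log; expand_tvec.
by rewrite texp_mkT3_0 /root_fst /root_snd; apply: T3_ext => * /=; field.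
Qed.

Lemma is_bary_pair a b : in_lie (tvec a) -> in_lie (tvec b) ->
  is_bary (texp (tvec a) :: texp (tvec b) :: nil) (tmul (texp (tvec a)) (texp_root a b)).
Proof.
move=> La Lb; have Lr := in_lie_root_log La Lb; split.
  by exists (bary_log (tvec a) (tvec b)); rewrite texp_bary_log; split => //; apply: in_lie_bary_log.
exists (tscale (-1) (root_log (tvec a) (tvec b)) :: root_log (tvec a) (tvec b) :: nil).
split; last by rewrite /tsum /=; apply: T3_ext => * /=; ring.
constructor; [split; first exact: lie_scale|constructor; [split => //|constructor]].
- by rewrite texp_root_log tmulA texpN ?tmul1r //; apply: in_lie_t0.
- by rewrite -texp_root_log tmulA texp_root_sqr -tmulA texp_tvecN tmul1l.
Qed.

Lemma is_bary_pairE a b g :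
  is_bary (texp (tvec a) :: texp (tvec b) :: nil) g -> g = tmul (texp (tvec a)) (texp_root a b).
Proof.
move=> [_ [zs [Hzs Hsum]]].
have [z1 [z2 [Ezs [[L1 E1] [L2 E2]]]]] := Forall2_pair_inv Hzs; subst zs.
have z2E : z2 = tscale (-1) z1.
  have := in_lie_t0 L1; move: Hsum; rewrite /tsum /= => Hsum z10.
  apply: T3_ext => /= [|a'|a' b'|a' b' c'].
  - by have := f_equal (@t0 d) Hsum; rewrite /= z10; lra.
  - by have := f_equal (fun u => t1 u a') Hsum; rewrite /=; lra.
  - by have := f_equal (fun u => t2 u a' b') Hsum; rewrite /=; lra.
  - by have := f_equal (fun u => t3 u a' b' c') Hsum; rewrite /=; lra.
have gE : g = tmul (texp (tvec a)) (texp z2).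
  by rewrite -E1 tmulA z2E texpN ?tmul1r //; apply: in_lie_t0.
suff root : texp z2 = texp_root a b by rewrite gE root.
apply: tsqr_inj.
- by rewrite /texp /= (in_lie_t0 L2); ring.
- by rewrite /texp_root !texp_tvec /=; ring.
rewrite texp_root_sqr -E2 gE -[LHS]tmul1l -(texp_tvecN (fun w => - a w)).
have -> : (fun w => - - a w) = a by apply: functional_extensionality => w; ring.
by rewrite !tmulA.
Qed.

End Barycenter.

Lemma Lim1E d (g : T3 d) : Defs.Lim 1 g -> exists a, g = texp (tvec a).
Proof. by move/Lim_texp_prod => [v ->]; exists (v 0%N); rewrite /= tmul1l. Qed.

Lemma Lim1_texp d (a : 'I_d -> R) : Defs.Lim 1 (texp (tvec a)).
Proof. by have := texp_prod_Lim (fun _ => a) (isT : (0 < 1)%N); rewrite /= tmul1l. Qed.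

Lemma bary_incl_pair d : bary_incl d (1%N :: 1%N :: nil) 3.
Proof.
move=> x g Hx Hg; have [x1 [x2 [Ex [L1 L2]]]] := Forall2_pair_inv Hx.
have [a Ea] := Lim1E L1; have [b Eb] := Lim1E L2; subst x x1 x2.
pose v k := match k with 0%N => a | 1%N => root_fst a b | _ => root_snd a b end.
have -> : g = texp_prod v 3 by rewrite (is_bary_pairE Hg) /= tmul1l !tmulA.
exact: texp_prod_Lim.
Qed.

Lemma not_Lim1_of_coords d (g : T3 d) i j :
  t1 g i = 1/2 -> t1 g j = 1/2 -> t3 g i i j = 0 -> ~ Defs.Lim 1 g.
Proof.
move=> gi gj giij /Lim1E [u gE]; rewrite gE texp_tvec /= in gi gj giij.
by rewrite gi gj in giij; lra.
Qed.

Lemma not_Lim2_of_coords d (g : T3 d) i j :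
  t1 g i = 1/2 -> t1 g j = 1/2 -> t2 g i j = 1/8 -> t3 g i i j = 0 -> ~ Defs.Lim 2 g.
Proof.
move=> gi gj gij giij /Lim_texp_prod [v gE].
have {}gE : g = tmul (texp (tvec (v 0%N))) (texp (tvec (v 1%N))) by rewrite gE /= tmul1l.
rewrite gE !texp_tvec tmul_mkT3_1 /= in gi gj gij giij.
have vi : v 1%N i = /2 - v 0%N i by lra.
have vj : v 1%N j = /2 - v 0%N j by lra.
rewrite vi vj in gij giij.
have v0ji : v 0%N j = v 0%N i by nra.
by rewrite v0ji in giij; nra.
Qed.

Section LowerBound.
Variables (d : nat) (Hd : (2 <= d)%N).

Let i : 'I_d := Ordinal (ltnW Hd).
Let j : 'I_d := Ordinal Hd.
Let a : 'I_d -> R := fun k => if k == i then 1 else 0.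
Let b : 'I_d -> R := fun k => if k == j then 1 else 0.
Let g := tmul (texp (tvec a)) (texp_root a b).

Lemma bary_basis_coords :
  [/\ t1 g i = 1/2, t1 g j = 1/2, t2 g i j = 1/8 & t3 g i i j = 0].
Proof.
have [ij ji] : (i == j) = false /\ (j == i) = false by [].
rewrite /g /texp_root !texp_tvec !tmul_mkT3_1 /= /a /b /root_fst /root_snd !eqxx ij ji.
by split; field.
Qed.

Lemma not_bary_incl_pair m : (m < 3)%N -> ~ bary_incl d (1%N :: 1%N :: nil) m.
Proof.
move=> Hm incl.
have {incl} g_Lim : Defs.Lim m g.
  apply: (incl (texp (tvec a) :: texp (tvec b) :: nil)).
    by repeat constructor; apply: Lim1_texp.
  by apply: is_bary_pair; apply: lie_gen.
have [gi gj gij giij] := bary_basis_coords.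
case: m Hm g_Lim => [|[|[|m]]] // _.
- exact: not_Lim0.
- exact: not_Lim1_of_coords gi gj giij.
- exact: not_Lim2_of_coords gi gj gij giij.
Qed.

End LowerBound.

Theorem lemma8p5 (d : nat) : (2 <= d)%N -> B_eq d (1%N :: 1%N :: nil) 3.
Proof.
move=> Hd; split; first exact: bary_incl_pair.
by move=> m; apply: not_bary_incl_pair.
Qed.
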